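(* Let $T$ be a causal theory with explainable symbols $\mathbf{p}$ all of whose rules are D-rules. Then the implication $$(\mathbf{u},\widehat{\mathbf{u}})\le(\mathbf{p},\neg\mathbf{p})\ \to\ \big(T^\dagger(\mathbf{u})_{\Sigma 2}\leftrightarrow H(\mathbf{u},\widehat{\mathbf{u}})\big)$$ is logically valid.
   Context: A causal theory $T$ consists of a list $\mathbf{p}$ of distinct predicate constants (explainable symbols, not equality) and a finite set of causal rules $F\Leftarrow G$. A D-rule has the form $\bigvee_{A\in Pos}A\lor\bigvee_{A\in Neg}\neg A\Leftarrow G$ with $Pos,Neg$ finite sets of atoms whose predicates belong to $\mathbf{p}$, $G$ a first-order formula without $\to$. For each $p\in\mathbf{p}$, $u_p,\widehat u_p$ are predicate variables of the arity of $p$, with lists $\mathbf{u},\widehat{\mathbf{u}}$; for $A=p(\mathbf{t})$, $u(A)=u_p(\mathbf{t})$, $\widehat u(A)=\widehat u_p(\mathbf{t})$. $\neg\mathbf{p}$ is the list of $\lambda\mathbf{x}\neg p(\mathbf{x})$; $p\le q$ is $\forall\mathbf{x}(p(\mathbf{x})\to q(\mathbf{x}))$, componentwise conjunction for tuples ($u_p$ matched with $p$, $\widehat u_p$ with $\lambda\mathbf{x}\neg p(\mathbf{x})$). $T^\dagger(\mathbf{u})$ is the conjunction over rules of $\forall\mathbf{x}(G\to F^{\mathbf{p}}_{\mathbf{u}})$, $\mathbf{x}$ the free variables, $F^{\mathbf{p}}_{\mathbf{u}}$ replacing each $p$ by $u_p$. $H(\mathbf{u},\widehat{\mathbf{u}})$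 is the conjunction over all rules of $\forall\mathbf{x}\Big(G\to\bigvee_{A\in Pos}\big((\widehat u(A)\lor A)\to u(A)\big)\lor\bigvee_{A\in Neg}\big((u(A)\lor\neg A)\to\widehat u(A)\big)\Big)$, $\mathbf{x}$ the free object variables. For a formula $F$, $F_{\Sigma 2}$ is the result of substituting simultaneously for each $u_p$ the predicate expression $\lambda\mathbf{x}\Big(\big(((\mathbf{u},\widehat{\mathbf{u}})\le(\mathbf{p},\neg\mathbf{p}))\land\neg u_p(\mathbf{x})\land\neg\widehat u_p(\mathbf{x})\big)\leftrightarrow\neg p(\mathbf{x})\Big)$. *)

From Stdlib Require Import List.
Import ListNotations.

Inductive term : Type :=
| Var : nat -> term
| Fn  : nat -> list term -> term.

Inductive formula : Type :=
| FTrue  : formula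
| FFalse : formula
| FEq    : term -> term -> formula
| FAtom  : nat -> list term -> formula
| FNot   : formula -> formula
| FAnd   : formula -> formula -> formula
| FOr    : formula -> formula -> formula
| FAll   : nat -> formula -> formula
| FEx    : nat -> formula -> formula.

Record structure : Type := {
  dom : Type;
  dom_inh : dom;
  fun_i : nat -> list dom -> dom;
  pred_i : nat -> list dom -> Prop
}.

Fixpoint eval_term (M : structure) (rho : nat -> dom M) (t : term) : dom M :=
  match t with
  | Var n => rho n
  | Fn f args => fun_i M f (map (eval_term M rho) args)
  end.

Definition update {D : Type} (rho : nat -> D) (n : nat) (d : D) : nat -> D :=
  fun m => if Nat.eqb m n then d else rho m.

Fixpoint holds (M : structure) (rho : nat -> dom M) (phi : formula) : Prop :=
  match phi with
  | FTrue => True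
  | FFalse => False
  | FEq t1 t2 => eval_term M rho t1 = eval_term M rho t2
  | FAtom P ts => pred_i M P (map (eval_term M rho) ts)
  | FNot f => ~ holds M rho f
  | FAnd f g => holds M rho f /\ holds M rho g
  | FOr f g => holds M rho f \/ holds M rho g
  | FAll n f => forall d : dom M, holds M (update rho n d) f
  | FEx n f => exists d : dom M, holds M (update rho n d) f
  end.

Definition atom : Type := (nat * list term)%type.

(* A D-rule  \/_{A in Pos} A  \/  \/_{A in Neg} ~A  <=  G. *)
Record drule : Type := {
  pos : list atom;
  neg : list atom;
  body : formula
}.

(* A causal theory all of whose rules are D-rules: a list of distinct
   explainable predicate constants and a finite set (list) of D-rules. *)
Record theory : Type := {
  expl : list nat;
  expl_nodup : NoDup expl;
  rules : list drule
}.

Definition drule_wf (ar : nat -> nat) (ps : list nat) (r : drule) : Prop :=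
  forall A : atom, In A (pos r ++ neg r) ->
    In (fst A) ps /\ length (snd A) = ar (fst A).

(* Interpretations of the predicate variables u_p (resp. uh_p), indexed by p. *)
Definition pvar (M : structure) : Type := nat -> list (dom M) -> Prop.

Definition atom_val (M : structure) (rho : nat -> dom M) (I : pvar M) (A : atom) : Prop :=
  I (fst A) (map (eval_term M rho) (snd A)).

Definition atom_holds (M : structure) (rho : nat -> dom M) (A : atom) : Prop :=
  atom_val M rho (pred_i M) A.

Definition le_pnp (ar : nat -> nat) (T : theory) (M : structure) (u uh : pvar M) : Prop :=
  forall P, In P (expl T) -> forall xs : list (dom M), length xs = ar P ->
    (u P xs -> pred_i M P xs) /\ (uh P xs -> ~ pred_i M P xs).

Definition Tdag (T : theory) (M : structure) (u : pvar M) : Prop :=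
  forall r, In r (rules T) -> forall rho : nat -> dom M,
    holds M rho (body r) ->
    (exists A, In A (pos r) /\ atom_val M rho u A) \/
    (exists A, In A (neg r) /\ ~ atom_val M rho u A).

Definition Hform (T : theory) (M : structure) (u uh : pvar M) : Prop :=
  forall r, In r (rules T) -> forall rho : nat -> dom M,
    holds M rho (body r) ->
    (exists A, In A (pos r) /\
       ((atom_val M rho uh A \/ atom_holds M rho A) -> atom_val M rho u A)) \/
    (exists A, In A (neg r) /\
       ((atom_val M rho u A \/ ~ atom_holds M rho A) -> atom_val M rho uh A)).

(* The predicate expression substituted for u_p by the Sigma2 substitution:
   lambda x ( ((u,uh) <= (p,~p) /\ ~u_p(x) /\ ~uh_p(x)) <-> ~p(x) ). *)
Definition sigma2 (ar : nat -> nat) (T : theory) (M : structure) (u uh : pvar M) : pvar M :=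
  fun P xs =>
    (le_pnp ar T M u uh /\ ~ u P xs /\ ~ uh P xs) <-> ~ pred_i M P xs.

(* Under (u, uh) <= (p, ~p) the conjunct (u, uh) <= (p, ~p) inside the Sigma2
   expression is true, so the substituted value of an atom A is
   (~u(A) /\ ~uh(A)) <-> ~A.  Since u(A) -> A and uh(A) -> ~A, a case split on
   A shows that this value is exactly the positive clause of H for A, and its
   negation exactly the negative clause.  T^dagger and H then agree rule by
   rule, disjunct by disjunct. *)
From Stdlib Require Import List Classical.

Section Sigma2Value.

Variables a b p : Prop.
Hypotheses (a_p : a -> p) (b_np : b -> ~ p).

Lemma sigma2_value_iff : ((~ a /\ ~ b) <-> ~ p) <-> ((b \/ p) -> a).
Proof. destruct (classic p), (classic a), (classic b); tauto. Qed.

Lemma sigma2_value_not_iff : ~ ((~ a /\ ~ b) <-> ~ p) <-> ((a \/ ~ p) -> b).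
Proof. destruct (classic p), (classic a), (classic b); tauto. Qed.

End Sigma2Value.

Section Sigma2Atom.

Variables (ar : nat -> nat) (T : theory) (M : structure) (u uh : pvar M).
Hypothesis Hle : le_pnp ar T M u uh.
Variables (rho : nat -> dom M) (A : atom).
Hypotheses (A_expl : In (fst A) (expl T)) (A_arity : length (snd A) = ar (fst A)).

Lemma atom_val_sigma2 :
  atom_val M rho (sigma2 ar T M u uh) A <->
  ((~ atom_val M rho u A /\ ~ atom_val M rho uh A) <-> ~ atom_holds M rho A).
Proof. unfold atom_val, sigma2; tauto. Qed.

Lemma atom_le_pnp :
  (atom_val M rho u A -> atom_holds M rho A) /\
  (atom_val M rho uh A -> ~ atom_holds M rho A).
Proof. apply Hle; [exact A_expl | now rewrite length_map]. Qed.

Lemma atom_val_sigma2_pos :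
  atom_val M rho (sigma2 ar T M u uh) A <->
  ((atom_val M rho uh A \/ atom_holds M rho A) -> atom_val M rho u A).
Proof.
  destruct atom_le_pnp as [u_A uh_A].
  rewrite atom_val_sigma2; now apply sigma2_value_iff.
Qed.

Lemma atom_val_sigma2_neg :
  ~ atom_val M rho (sigma2 ar T M u uh) A <->
  ((atom_val M rho u A \/ ~ atom_holds M rho A) -> atom_val M rho uh A).
Proof.
  destruct atom_le_pnp as [u_A uh_A].
  rewrite atom_val_sigma2; now apply sigma2_value_not_iff.
Qed.

End Sigma2Atom.

Theorem lemma7 (ar : nat -> nat) (T : theory)
  (HD : forall r, In r (rules T) -> drule_wf ar (expl T) r)
  (M : structure) (u uh : pvar M) :
  le_pnp ar T M u uh ->
  (Tdag T M (sigma2 ar T M u uh) <-> Hform T M u uh).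
Proof.
  intros Hle.
  unfold Tdag, Hform; split; intros H r Hr rho Hb;
    destruct (H r Hr rho Hb) as [[A [HA HV]] | [A [HA HV]]];
    [left | right | left | right]; exists A; split; try exact HA;
    destruct (HD r Hr A) as [A_expl A_arity]; auto using in_or_app.
  - exact (proj1 (atom_val_sigma2_pos ar T M u uh Hle rho A A_expl A_arity) HV).
  - exact (proj1 (atom_val_sigma2_neg ar T M u uh Hle rho A A_expl A_arity) HV).
  - exact (proj2 (atom_val_sigma2_pos ar T M u uh Hle rho A A_expl A_arity) HV).
  - exact (proj2 (atom_val_sigma2_neg ar T M u uh Hle rho A A_expl A_arity) HV).
Qed.
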